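(* Let $G$ be a (finite, or countable locally finite) cavity-monotone network such that for every $t>0$ the cavity equation $\mathbf x=t\Gamma_G(\mathbf x)$ has a unique globally attractive solution $\mathbf x(t)$. Then for all $0<s\le t$, $$\frac{s}{t}\,\mathbf x(t)\le\mathbf x(s)\le\mathbf x(t)$$ coordinatewise. In particular $t\mapsto\mathbf x(t)$ is continuous on $(0,\infty)$.
   Context: Measures over subsets: for a finite set $E$, a measure is $\mu:2^E\to[0,\infty)$; $Z(\mathbf w)=\sum_{F\subseteq E}\mu(F)\mathbf w^F$, $\mathbf w^F=\prod_{e\in F}w_e$; the cavity ratio is $\Gamma^e_\mu(\mathbf w')=Z^{/e}(\mathbf w')/Z^{\setminus e}(\mathbf w')$ where $Z^{\setminus e}(\mathbf w')=\sum_{F\not\ni e}\mu(F)\mathbf w'^F$, $Z^{/e}(\mathbf w')=\sum_{F\not\ni e}\mu(F\cup\{e\})\mathbf w'^F$; for $\mathbf w\in(0,\infty)^E$, $\mathbb P^{\mathbf w}_\mu(\mathcal F=F)=\mu(F)\mathbf w^F/Z(\mathbf w)$. $\mu$ is Rayleigh if for all $\mathbf w\in(0,\infty)^E$, $e\neq f$: $\mathbb P^{\mathbf w}_\mu(e,f\in\mathcal F)\le\mathbb P^{\mathbf w}_\mu(e\in\mathcal F)\mathbb P^{\mathbf w}_\mu(f\in\mathcal F)$; size-increasing if for all $\mathbf w\in(0,\infty)^E$, $e\in E$: $\mathbb E^{\mathbf w}_\mu[|\mathcal F|\mathbf 1_{e\in\mathcal F}]>\mathbb E^{\mathbf w}_\mu|\mathcal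 F|\,\mathbb P^{\mathbf w}_\mu(e\in\mathcal F)$; cavity-monotone if $\mu(\emptyset)>0$, Rayleigh and size-increasing. Networks: a network is a simple locally finite graph $G=(V,E)$ with, for each $i\in V$, a local measure $\mu_i$ over the subsets of $E_i$ (edges incident to $i$); cavity-monotone if every $\mu_i$ is; $\partial i$ is the set of neighbours of $i$. Configurations $\mathbf x\in[0,\infty)^{\vec E}$; cavity operator $\Gamma_G(\mathbf x)_{i\to j}=\Gamma^{ij}_{\mu_i}(x_{k\to i}:k\in\partial i\setminus\{j\})$; cavity equation at activity $t$: $\mathbf x=t\Gamma_G(\mathbf x)$; a solution is globally attractive if the iterates of $t\Gamma_G$ from any configuration converge coordinatewise to it. *)

From mathcomp Require Import all_boot.
From Stdlib Require Import Reals.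
Set Implicit Arguments. Unset Strict Implicit. Unset Printing Implicit Defensive.
Open Scope R_scope.

Section Measures.
Variable E : finType.
Implicit Types (mu : {set E} -> R) (w : E -> R).

Definition wpow w (F : {set E}) : R := \big[Rmult/1]_(e in F) w e.

Definition Zpart mu w : R := \big[Rplus/0]_(F : {set E}) (mu F * wpow w F).

Definition Zdel mu (e : E) w : R :=
  \big[Rplus/0]_(F : {set E} | e \notin F) (mu F * wpow w F).
Definition Zcon mu (e : E) w : R :=
  \big[Rplus/0]_(F : {set E} | e \notin F) (mu (e |: F) * wpow w F).

(* cavity ratio Gamma^e_mu(w') ; coordinate w'_e is irrelevant *)
Definition cavity_ratio mu (e : E) w : R := Zcon mu e w / Zdel mu e w.

Definition prob mu w (P : pred {set E}) : R :=
  (\big[Rplus/0]_(F : {set E} | P F) (mu F * wpow w F)) / Zpart mu w.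

Definition expect mu w (g : {set E} -> R) : R :=
  (\big[Rplus/0]_(F : {set E}) (g F * (mu F * wpow w F))) / Zpart mu w.

Definition positive_weights w : Prop := forall e, 0 < w e.

Definition rayleigh mu : Prop :=
  forall w, positive_weights w -> forall e f : E, e != f ->
    prob mu w (fun F => (e \in F) && (f \in F))
      <= prob mu w (fun F => e \in F) * prob mu w (fun F => f \in F).

Definition size_increasing mu : Prop :=
  forall w, positive_weights w -> forall e : E,
    expect mu w (fun F => INR #|F| * (if e \in F then 1 else 0))
      > expect mu w (fun F => INR #|F|) * prob mu w (fun F => e \in F).

Definition cavity_monotone mu : Prop :=
  0 < mu set0 /\ rayleigh mu /\ size_increasing mu.

End Measures.

(* A network on a countable vertex type V: a simple locally finite graph given
   by finite neighbour lists (symmetric, loop-free), and for each vertex i a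
   local measure mu i on the subsets of E_i, where the edge {i,j} in E_i is
   identified with the neighbour j (an element of seq_sub (nb i)). *)
Record network (V : countType) := Network {
  nb : V -> seq V;
  nb_irrefl : forall i, i \notin nb i;
  nb_sym : forall i j, (j \in nb i) = (i \in nb j);
  lmu : forall i : V, {set seq_sub (nb i)} -> R;
  lmu_nonneg : forall (i : V) (F : {set seq_sub (nb i)}), 0 <= lmu F
}.

Definition cavity_monotone_network (V : countType) (G : network V) : Prop :=
  forall i : V, cavity_monotone (@lmu V G i).

(* configurations: x i j = x_{i -> j}; only values on directed edges matter *)
Definition config (V : countType) := V -> V -> R.

Definition is_config (V : countType) (G : network V) (x : config V) : Prop :=
  forall i j, j \in nb G i -> 0 <= x i j.

(* Gamma_G(x)_{i->j} = Gamma^{ij}_{mu_i}(x_{k->i} : k in di \ {j}); 0 off edges *)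
Definition cavity_op (V : countType) (G : network V) (x : config V) : config V :=
  fun i j =>
    match (insub j : option (seq_sub (nb G i))) with
    | Some e => cavity_ratio (@lmu V G i) e (fun k : seq_sub (nb G i) => x (val k) i)
    | None => 0
    end.

Definition is_cavity_solution (V : countType) (G : network V) (t : R) (x : config V) : Prop :=
  is_config G x /\ forall i j, j \in nb G i -> x i j = t * cavity_op G x i j.

Definition cavity_iter (V : countType) (G : network V) (t : R) (n : nat) (y : config V) : config V :=
  iter n (fun z : config V => fun i j => t * cavity_op G z i j) y.

Definition globally_attractive (V : countType) (G : network V) (t : R) (x : config V) : Prop :=
  forall y : config V, is_config G y ->
    forall i j, j \in nb G i -> Un_cv (fun n => cavity_iter G t n y i j) (x i j).

(* Two monotonicity properties of the cavity ratio drive the proof. As a function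
   of one coordinate x, Gamma^e_mu = (A + x B) / (C + x D) with A, B, C, D sums over
   the sets avoiding e and that coordinate, and the Rayleigh property says exactly
   B C <= A D: Gamma is antitone in every coordinate. The size-increasing property
   says that the odds P(e in F) / P(e notin F) = w_e Gamma(w) increase along the ray
   a w, so a Gamma(a w) <= Gamma(w) for a <= 1. Together they show that, for s = a t,
   the box [a x(t), x(t)] is invariant under s Gamma_G: Gamma(x) <= Gamma(y) <= Gamma(a x)
   and s Gamma(a x) <= t Gamma(x) = x. The iterates of s Gamma_G started at x(t) converge
   to x(s), which gives the bounds, and these make t |-> x(t) locally Lipschitz.
   The two cavity-ratio inequalities are proved for positive weights and extended to
   nonnegative ones by continuity. *)

From HB Require Import structures.
From mathcomp Require Import all_boot.
From Stdlib Require Import Reals Lra Psatz FunctionalExtensionality.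
Set Implicit Arguments. Unset Strict Implicit. Unset Printing Implicit Defensive.
Open Scope R_scope.

HB.instance Definition _ := Monoid.isComLaw.Build R 0 Rplus
  (fun x y z => esym (Rplus_assoc x y z)) Rplus_comm Rplus_0_l.
HB.instance Definition _ := Monoid.isComLaw.Build R 1 Rmult
  (fun x y z => esym (Rmult_assoc x y z)) Rmult_comm Rmult_1_l.
HB.instance Definition _ := Monoid.isMulLaw.Build R 0 Rmult Rmult_0_l Rmult_0_r.
HB.instance Definition _ := Monoid.isAddLaw.Build R Rmult Rplus
  Rmult_plus_distr_r Rmult_plus_distr_l.

Lemma continuity_pt_big (I : Type) (op : R -> R -> R) (idx : R) (r : seq I) (P : pred I)
    (h : I -> R -> R) (x : R) :
  (forall f g, continuity_pt f x -> continuity_pt g x ->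
     continuity_pt (fun t => op (f t) (g t)) x) ->
  (forall i, continuity_pt (h i) x) ->
  continuity_pt (fun t => \big[op/idx]_(i <- r | P i) h i t) x.
Proof.
move=> op_cont h_cont; elim: r => [|i r IHr].
  have -> : (fun t => \big[op/idx]_(i <- [::] | P i) h i t) = fun _ => idx.
    by apply: functional_extensionality => t; rewrite big_nil.
  exact: continuity_pt_const.
have -> : (fun t => \big[op/idx]_(j <- i :: r | P j) h j t) =
    fun t => if P i then op (h i t) (\big[op/idx]_(j <- r | P j) h j t)
             else \big[op/idx]_(j <- r | P j) h j t.
  by apply: functional_extensionality => t; rewrite big_cons.
by case: (P i) => //; apply: op_cont.
Qed.

Lemma continuity_pt_shift (a x : R) : continuity_pt (fun t => a + t) x.
Proof.
apply: continuity_pt_plus; first exact: continuity_pt_const.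
exact: derivable_continuous_pt (derivable_pt_id x).
Qed.

Lemma le_continuous_at0 (f g : R -> R) : continuity_pt f 0 -> continuity_pt g 0 ->
  (forall t, 0 < t -> f t <= g t) -> f 0 <= g 0.
Proof.
move=> f_cont g_cont f_le_g; apply: Rnot_lt_le => gf.
have [d [d_gt0 near0]] := continuity_pt_minus _ _ 0 g_cont f_cont (f 0 - g 0) ltac:(lra).
have d2_near : D_x no_cond 0 (d / 2) /\ R_dist (d / 2) 0 < d.
  by split; [split; [|lra] | rewrite /R_dist Rminus_0_r Rabs_right; lra].
have := near0 _ d2_near; have := f_le_g (d / 2) ltac:(lra).
rewrite /= /R_dist /minus_fct => fg_d2 dist_lt.
have := Rle_abs (g (d / 2) - f (d / 2) - (g 0 - f 0)); lra.
Qed.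

Lemma derivable_pt_lim_big_Rplus (I : Type) (r : seq I) (P : pred I)
    (h : I -> R -> R) (h' : I -> R) (x : R) :
  (forall i, derivable_pt_lim (h i) x (h' i)) ->
  derivable_pt_lim (fun t => \big[Rplus/0]_(i <- r | P i) h i t) x
                   (\big[Rplus/0]_(i <- r | P i) h' i).
Proof.
move=> h_der; elim: r => [|i r IHr].
  rewrite big_nil; apply: (derivable_pt_lim_ext (fct_cte 0)) => [t|].
    by rewrite big_nil.
  exact: derivable_pt_lim_const.
rewrite big_cons; case Pi: (P i).
- apply: (derivable_pt_lim_ext (h i + (fun t => \big[Rplus/0]_(j <- r | P j) h j t))%F).
    by move=> t; rewrite big_cons Pi.
  exact: derivable_pt_lim_plus.
- apply: (derivable_pt_lim_ext (fun t => \big[Rplus/0]_(j <- r | P j) h j t)) => // t.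
  by rewrite big_cons Pi.
Qed.

Lemma Un_cv_const (c : R) : Un_cv (fun _ => c) c.
Proof. by move=> eps eps_gt0; exists 0%nat => n _; rewrite /R_dist Rminus_eq_0 Rabs_R0. Qed.

Lemma continuity_pt_lipschitz_at (f : R -> R) (x0 K d : R) : 0 < d ->
  (forall x, Rabs (x - x0) < d -> Rabs (f x - f x0) <= K * Rabs (x - x0)) ->
  continuity_pt f x0.
Proof.
move=> d_gt0 lip eps eps_gt0.
have K'_gt0 : 0 < Rabs K + 1 by have := Rabs_pos K; lra.
exists (Rmin d (eps / (Rabs K + 1))); split.
  by apply: Rmin_pos => //; apply: Rdiv_lt_0_compat.
move=> x [_ near_x0]; rewrite /= /R_dist in near_x0 *.
have x_d := Rlt_le_trans _ _ _ near_x0 (Rmin_l _ _).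
have x_eps := Rlt_le_trans _ _ _ near_x0 (Rmin_r _ _).
apply: Rle_lt_trans (lip x x_d) _.
apply: (Rle_lt_trans _ ((Rabs K + 1) * Rabs (x - x0))).
  by apply: Rmult_le_compat_r; [apply: Rabs_pos | have := Rle_abs K; lra].
have -> : eps = (Rabs K + 1) * (eps / (Rabs K + 1)) by field; lra.
exact: Rmult_lt_compat_l.
Qed.

(* [s / t * f t <= f s <= f t] makes [f] Lipschitz at [t0] with constant [f t0 / t0]. *)
Lemma continuity_pt_scaled_monotone (f : R -> R) (t0 : R) : 0 < t0 ->
  (forall s t, 0 < s -> s <= t -> s / t * f t <= f s <= f t) -> continuity_pt f t0.
Proof.
move=> t0_gt0 f_scaled.
apply: (@continuity_pt_lipschitz_at _ _ (f t0 / t0) t0) => // t near_t0.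
have t_gt0 : 0 < t by have := Rle_abs (t0 - t); rewrite Rabs_minus_sym; lra.
have [t_le_t0|t0_lt_t] := Rle_lt_dec t t0.
- have [lo hi] := f_scaled t t0 t_gt0 t_le_t0.
  rewrite Rabs_left1 ?Rabs_left1; try lra.
  have -> : f t0 / t0 * - (t - t0) = f t0 - t / t0 * f t0 by field; lra.
  lra.
- have [lo hi] := f_scaled t0 t t0_gt0 (Rlt_le _ _ t0_lt_t).
  have {}lo : f t <= t / t0 * f t0.
    have -> : f t = t / t0 * (t0 / t * f t) by field; lra.
    by apply: Rmult_le_compat_l => //; apply: Rlt_le; apply: Rdiv_lt_0_compat.
  rewrite Rabs_right ?Rabs_right; try lra.
  have -> : f t0 / t0 * (t - t0) = t / t0 * f t0 - f t0 by field; lra.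
  lra.
Qed.

Lemma affine_ratio_antitone (A B C D x x' : R) :
  0 < C -> 0 <= D -> 0 <= x -> x <= x' -> B * C <= A * D ->
  (A + x' * B) / (C + x' * D) <= (A + x * B) / (C + x * D).
Proof.
move=> C_gt0 D_ge0 x_ge0 xx' BC_AD.
have den_gt0 y : 0 <= y -> 0 < C + y * D by move=> y_ge0; have := Rmult_le_pos _ _ y_ge0 D_ge0; lra.
have den'_gt0 := den_gt0 x' ltac:(lra); have {den_gt0} den_gt0 := den_gt0 x x_ge0.
apply: (Rmult_le_reg_r ((C + x' * D) * (C + x * D))); first exact: Rmult_lt_0_compat.
have -> : (A + x' * B) / (C + x' * D) * ((C + x' * D) * (C + x * D)) =
          (A + x' * B) * (C + x * D) by field; lra.
have -> : (A + x * B) / (C + x * D) * ((C + x' * D) * (C + x * D)) =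
          (A + x * B) * (C + x' * D) by field; lra.
have : 0 <= (x' - x) * (A * D - B * C) by apply: Rmult_le_pos; lra.
nra.
Qed.

Section WeightedSums.
Variable E : finType.
Implicit Types (P Q : pred {set E}) (g : {set E} -> R) (w : E -> R) (f : E) (F : {set E}).

Definition wsum P g w : R := \big[Rplus/0]_(F | P F) (g F * wpow w F).

Definition avoids (e f : E) : pred {set E} := fun F => (e \notin F) && (f \notin F).

Lemma wpow_set0 w : wpow w set0 = 1.
Proof. by rewrite /wpow big_set0. Qed.

Lemma wpow_setU1 w f F : f \notin F -> wpow w (f |: F) = w f * wpow w F.
Proof. by move=> fF; rewrite /wpow big_setU1. Qed.

Lemma wpow_ge0 w F : (forall k, 0 <= w k) -> 0 <= wpow w F.
Proof.
move=> w_ge0; apply: (big_ind (fun x => 0 <= x)) => //; first lra.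
exact: Rmult_le_pos.
Qed.

Lemma wpow_scale (l : R) w F : wpow (fun k => l * w k) F = l ^ #|F| * wpow w F.
Proof.
rewrite /wpow big_split /= big_const; congr (_ * _).
by elim: #|F| => //= n ->.
Qed.

Lemma eq_wsum_weights P g w w' :
  (forall F, P F -> forall k, k \in F -> w k = w' k) -> wsum P g w = wsum P g w'.
Proof.
move=> ww'; apply: eq_bigr => F PF; congr (_ * _).
by apply: eq_bigr => k; apply: ww'.
Qed.

Lemma wsum_ge0 P g w :
  (forall F, 0 <= g F) -> (forall k, 0 <= w k) -> 0 <= wsum P g w.
Proof.
move=> g_ge0 w_ge0; rewrite /wsum; apply: (big_ind (fun x => 0 <= x)) => //; first lra.
- by move=> x y; lra.
- by move=> F _; apply: Rmult_le_pos => //; apply: wpow_ge0.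
Qed.

Lemma wsum_ge_set0 P g w :
  (forall F, 0 <= g F) -> (forall k, 0 <= w k) -> P set0 -> g set0 <= wsum P g w.
Proof.
move=> g_ge0 w_ge0 P0; rewrite /wsum (bigD1 set0) //= wpow_set0 Rmult_1_r.
rewrite -[X in X <= _]Rplus_0_r; apply: Rplus_le_compat_l; exact: wsum_ge0.
Qed.

Lemma wsum_split f P g w :
  wsum P g w = wsum (fun F => P F && (f \notin F)) g w +
     w f * wsum (fun F => P (f |: F) && (f \notin F)) (fun F => g (f |: F)) w.
Proof.
rewrite /wsum (bigID (fun F : {set E} => f \in F)) /= Rplus_comm; congr (_ + _).
rewrite (reindex_onto (fun F : {set E} => f |: F) (fun F : {set E} => F :\ f)) /=;
  last by move=> F /andP[_ fF]; rewrite setD1K.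
rewrite big_distrr /=; apply: eq_big => [F|F /andP[_ /eqP FfF]].
- rewrite setU11 andbT; congr andb.
  case fF: (f \in F) => /=; last by rewrite setU1K ?fF // eqxx.
  by apply/negbTE/eqP => FfF; move: (setD11 f (f |: F)); rewrite FfF fF.
- have fF : f \notin F by rewrite -FfF setD11.
  by rewrite wpow_setU1 //; ring.
Qed.

Lemma wsum_pred_if P Q (b : bool) g w :
  (forall F, P F = Q F && b) -> wsum P g w = if b then wsum Q g w else 0.
Proof.
case: b => PQ; first by apply: eq_bigl => F; rewrite PQ andbT.
by rewrite /wsum big_pred0 // => F; rewrite PQ andbF.
Qed.

(* [b00 .. b11] are the values of [Q] on the four possible traces of [F] on [{e, f}]. *)
Lemma wsum_slices (e f : E) Q (b00 b01 b10 b11 : bool) g w : e != f ->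
  (forall F, e \notin F -> f \notin F ->
     [/\ Q F = b00, Q (f |: F) = b01, Q (e |: F) = b10 & Q (e |: (f |: F)) = b11]) ->
  wsum Q g w =
   (if b00 then wsum (avoids e f) g w else 0) +
   w f * (if b01 then wsum (avoids e f) (fun F => g (f |: F)) w else 0) +
   w e * ((if b10 then wsum (avoids e f) (fun F => g (e |: F)) w else 0) +
          w f * (if b11 then wsum (avoids e f) (fun F => g (e |: (f |: F))) w else 0)).
Proof.
move=> nef HQ.
have efF F : (e \notin f |: F) = (e \notin F) by rewrite in_setU1 (negbTE nef).
have slice (b : bool) (S T : {set E} -> {set E}) :
    (forall F, e \notin F -> f \notin F -> Q (S F) = b) ->
    (forall F, (e \notin T F) = (e \notin F)) ->
    forall h, wsum (fun F => Q (S F) && (e \notin T F) && (f \notin F)) h w =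
              if b then wsum (avoids e f) h w else 0.
  move=> QS eT h; apply: wsum_pred_if => F; rewrite /avoids eT.
  case eF: (e \in F); first by rewrite !andbF.
  case fF: (f \in F); first by rewrite !andbF.
  by rewrite (QS F (negbT eF) (negbT fF)) /= !andbT.
rewrite (wsum_split e) (wsum_split f)
  (wsum_split f (fun F : {set E} => Q (e |: F) && (e \notin F))).
rewrite (slice b00 (fun F => F) (fun F => F)) ?(slice b01 (fun F => f |: F) (fun F => f |: F))
  ?(slice b10 (fun F => e |: F) (fun F => F)) ?(slice b11 (fun F => e |: (f |: F)) (fun F => f |: F)) //.
all: by move=> F eF fF; case: (HQ F eF fF).
Qed.

Lemma continuity_pt_wsum P g (phi : E -> R -> R) (x : R) :
  (forall k, continuity_pt (phi k) x) ->
  continuity_pt (fun t => wsum P g (fun k => phi k t)) x.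
Proof.
move=> phi_cont; apply: continuity_pt_big => [f1 f2|F]; first exact: continuity_pt_plus.
apply: (continuity_pt_mult (fun _ => g F)); first exact: continuity_pt_const.
apply: continuity_pt_big => // f1 f2; exact: continuity_pt_mult.
Qed.

Lemma le_weights_ge0 (f g : (E -> R) -> R) w :
  (forall k, 0 <= w k) ->
  continuity_pt (fun t => f (fun k => w k + t)) 0 ->
  continuity_pt (fun t => g (fun k => w k + t)) 0 ->
  (forall v, positive_weights v -> f v <= g v) -> f w <= g w.
Proof.
move=> w_ge0 f_cont g_cont f_le_g.
have shift0 : (fun k => w k + 0) = w by apply: functional_extensionality => k; ring.
rewrite -shift0; apply: (le_continuous_at0 f_cont g_cont) => t t_gt0.
by apply: f_le_g => k; have := w_ge0 k; lra.
Qed.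

(* Along the ray [t * w], differentiating [t ^ #|F|] weights each [F] by [#|F| / t]. *)
Lemma derivable_pt_lim_wsum_scale P g w (l : R) : l <> 0 ->
  derivable_pt_lim (fun t => wsum P g (fun k => t * w k)) l
    (wsum P (fun F => INR #|F| * g F) (fun k => l * w k) / l).
Proof.
move=> l_neq0.
apply: (derivable_pt_lim_ext
          (fun t => \big[Rplus/0]_(F | P F) (g F * wpow w F * t ^ #|F|))) => [t|].
  by apply: eq_bigr => F _; rewrite wpow_scale; ring.
have -> : wsum P (fun F => INR #|F| * g F) (fun k => l * w k) / l =
    \big[Rplus/0]_(F | P F) (g F * wpow w F * (INR #|F| * l ^ Nat.pred #|F|)).
  rewrite /Rdiv big_distrl /=; apply: eq_bigr => F _; rewrite wpow_scale.
  by case: #|F| => [|n]; rewrite /= ?S_INR; field.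
apply: derivable_pt_lim_big_Rplus => F.
exact: derivable_pt_lim_scal (derivable_pt_lim_pow l #|F|).
Qed.

End WeightedSums.

Section CavityRatio.
Variables (E : finType) (mu : {set E} -> R).
Hypotheses (mu_ge0 : forall F, 0 <= mu F) (mu_set0 : 0 < mu set0).
Implicit Types (e f : E) (w u : E -> R) (F : {set E}) (P : pred {set E}).

Lemma ZdelE e w : Zdel mu e w = wsum (fun F => e \notin F) mu w.
Proof. by []. Qed.

Lemma ZconE e w : Zcon mu e w = wsum (fun F => e \notin F) (fun F => mu (e |: F)) w.
Proof. by []. Qed.

Lemma probE w P : prob mu w P = wsum P mu w / wsum (fun _ => true) mu w.
Proof. by []. Qed.

Lemma wsum_mu_gt0 P w : (forall k, 0 <= w k) -> P set0 -> 0 < wsum P mu w.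
Proof. by move=> w_ge0 P0; apply: Rlt_le_trans mu_set0 _; apply: wsum_ge_set0. Qed.

Lemma eq_cavity_ratio e w w' :
  (forall k, k != e -> w k = w' k) -> cavity_ratio mu e w = cavity_ratio mu e w'.
Proof.
move=> ww'; rewrite /cavity_ratio !ZdelE !ZconE.
by congr (_ / _); apply: eq_wsum_weights => F eF k kF; apply: ww';
  apply: contraNneq eF => <-.
Qed.

Lemma continuity_pt_cavity_ratio e (phi : E -> R -> R) x :
  (forall k, continuity_pt (phi k) x) -> (forall k, 0 <= phi k x) ->
  continuity_pt (fun t => cavity_ratio mu e (fun k => phi k t)) x.
Proof.
move=> phi_cont phi_ge0; rewrite /cavity_ratio.
apply: (continuity_pt_div (fun t => Zcon mu e (fun k => phi k t))
                          (fun t => Zdel mu e (fun k => phi k t)));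
  try exact: continuity_pt_wsum.
by apply: Rgt_not_eq; apply: wsum_mu_gt0; rewrite ?in_set0.
Qed.

Section Rayleigh.
Hypothesis mu_rayleigh : rayleigh mu.

Lemma rayleigh_slices_pos e f u : e != f -> positive_weights u ->
  wsum (avoids e f) (fun F => mu (e |: (f |: F))) u * wsum (avoids e f) mu u <=
  wsum (avoids e f) (fun F => mu (e |: F)) u * wsum (avoids e f) (fun F => mu (f |: F)) u.
Proof.
(* With [Z = C + u f * D + u e * (A + u f * B)], Rayleigh at [u] reads
   [u e * u f * B * Z <= u e * (A + u f * B) * u f * (D + u e * B)], i.e. [B * C <= A * D]. *)
move=> nef u_pos.
have u_ge0 k : 0 <= u k by apply: Rlt_le.
have fne : (f == e) = false by rewrite eq_sym (negbTE nef).
have traces F : e \notin F -> f \notin F ->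
    [/\ e \in F = false, e \in f |: F = false, f \in F = false & f \in e |: F = false].
  by move=> eF fF; rewrite !in_setU1 fne (negbTE nef) (negbTE eF) (negbTE fF).
have := mu_rayleigh u_pos nef; rewrite !probE.
rewrite (@wsum_slices _ e f (fun _ => true) true true true true _ _ nef) //.
rewrite (@wsum_slices _ e f (fun F => (e \in F) && (f \in F)) false false false true _ _ nef); last first.
  by move=> F eF fF; case: (traces F eF fF); rewrite !setU11 !in_setU1 eqxx orbT => -> -> -> ->.
rewrite (@wsum_slices _ e f (fun F => e \in F) false false true true _ _ nef); last first.
  by move=> F eF fF; case: (traces F eF fF); rewrite !setU11 => -> -> _ _.
rewrite (@wsum_slices _ e f (fun F => f \in F) false true false true _ _ nef) //=; last first.
  by move=> F eF fF; case: (traces F eF fF); rewrite !setU11 !in_setU1 eqxx orbT => _ _ -> ->.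
rewrite ?Rmult_0_r ?Rplus_0_l.
set C := wsum (avoids e f) mu u.
set D := wsum (avoids e f) (fun F => mu (f |: F)) u.
set A := wsum (avoids e f) (fun F => mu (e |: F)) u.
set B := wsum (avoids e f) (fun F => mu (e |: (f |: F))) u.
have C_gt0 : 0 < C by apply: wsum_mu_gt0; rewrite // /avoids !in_set0.
have D_ge0 : 0 <= D by apply: wsum_ge0.
have A_ge0 : 0 <= A by apply: wsum_ge0.
have B_ge0 : 0 <= B by apply: wsum_ge0.
set Z := C + u f * D + u e * (A + u f * B).
have Z_gt0 : 0 < Z.
  have := Rmult_le_pos _ _ (u_ge0 f) D_ge0.
  have := Rmult_le_pos _ _ (u_ge0 e) (Rplus_le_le_0_compat _ _ A_ge0 (Rmult_le_pos _ _ (u_ge0 f) B_ge0)).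
  rewrite /Z; lra.
move=> ray.
have {}ray : u e * u f * (B * Z) <= u e * u f * ((A + u f * B) * (D + u e * B)).
  have := Rmult_le_compat_r (Z * Z) _ _ (Rlt_le _ _ (Rmult_lt_0_compat _ _ Z_gt0 Z_gt0)) ray.
  by congr Rle; field; lra.
have {}ray := Rmult_le_reg_l _ _ _ (Rmult_lt_0_compat _ _ (u_pos e) (u_pos f)) ray.
rewrite /Z in ray; nra.
Qed.

Lemma rayleigh_slices e f u : e != f -> (forall k, 0 <= u k) ->
  wsum (avoids e f) (fun F => mu (e |: (f |: F))) u * wsum (avoids e f) mu u <=
  wsum (avoids e f) (fun F => mu (e |: F)) u * wsum (avoids e f) (fun F => mu (f |: F)) u.
Proof.
move=> nef u_ge0.
apply: (le_weights_ge0
  (f := fun v => wsum (avoids e f) (fun F => mu (e |: (f |: F))) v * wsum (avoids e f) mu v)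
  (g := fun v => wsum (avoids e f) (fun F => mu (e |: F)) v *
                 wsum (avoids e f) (fun F => mu (f |: F)) v)) => // [||v v_pos];
  last exact: rayleigh_slices_pos.
all: by apply: (continuity_pt_mult (fun t => _ (fun k => u k + t)) (fun t => _ (fun k => u k + t)));
  apply: continuity_pt_wsum => k; apply: continuity_pt_shift.
Qed.

Lemma cavity_ratio_antitone_at e f u u' :
  (forall k, k != f -> u k = u' k) -> (forall k, 0 <= u k) -> u f <= u' f ->
  cavity_ratio mu e u' <= cavity_ratio mu e u.
Proof.
move=> uu' u_ge0 uu'_f.
have [ef|nef] := eqVneq e f.
  by subst f; rewrite (@eq_cavity_ratio e u' u) => [|k /uu' ->]; [apply: Rle_refl|].
have traces F : e \notin F -> f \notin F ->
    [/\ e \notin F = true, e \notin f |: F = true, e \notin e |: F = false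
      & e \notin e |: (f |: F) = false].
  by move=> eF fF; rewrite !in_setU1 !eqxx (negbTE nef) (negbTE eF).
have slices_eq h : wsum (avoids e f) h u' = wsum (avoids e f) h u.
  apply: eq_wsum_weights => F /andP[_ fF] k kF; apply/esym/uu'.
  by apply: contraNneq fF => <-.
rewrite /cavity_ratio !ZdelE !ZconE.
rewrite !(@wsum_slices _ e f (fun F => e \notin F) true true false false _ _ nef traces).
rewrite !slices_eq ?(Rmult_0_r, Rplus_0_l, Rplus_0_r).
apply: affine_ratio_antitone => //.
- by apply: wsum_mu_gt0; rewrite // /avoids !in_set0.
- exact: wsum_ge0.
- exact: rayleigh_slices.
Qed.

Lemma cavity_ratio_antitone e w w' :
  (forall k, 0 <= w k) -> (forall k, w k <= w' k) ->
  cavity_ratio mu e w' <= cavity_ratio mu e w.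
Proof.
move=> w_ge0 ww'.
pose mix (r : seq E) k := if k \in r then w' k else w k.
have mix_ge0 r k : 0 <= mix r k.
  by rewrite /mix; case: ifP => _; [exact: Rle_trans (w_ge0 k) (ww' k) | exact: w_ge0].
have -> : w' = mix (enum E).
  by apply: functional_extensionality => k; rewrite /mix mem_enum.
elim: (enum E) => [|f r IHr].
  by rewrite (_ : mix [::] = w) //; apply: Rle_refl.
apply: Rle_trans IHr; apply: (@cavity_ratio_antitone_at e f) => // [k kf|].
  by rewrite /mix in_cons (negbTE kf).
by rewrite /mix in_cons eqxx; case: ifP => _; [apply: Rle_refl | apply: ww'].
Qed.

End Rayleigh.

Lemma cavity_ratio_odds e w :
  w e * cavity_ratio mu e w = wsum (fun F => e \in F) mu w / wsum (fun F => e \notin F) mu w.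
Proof.
rewrite (wsum_split e) /wsum big_pred0 => [|F]; last by rewrite andbN.
rewrite /cavity_ratio ZconE ZdelE /wsum.
under [X in _ = (0 + w e * X) / _]eq_bigl do rewrite setU11 andTb.
by rewrite /Rdiv; ring.
Qed.

Section SizeIncreasing.
Hypothesis mu_size : size_increasing mu.

(* The size-increasing inequality multiplied by [Z ^ 2], with [Z = N + M]; the
   terms [KN * N] cancel. *)
Lemma size_increasing_cross e w : positive_weights w ->
  wsum (fun F => e \notin F) (fun F => INR #|F| * mu F) w * wsum (fun F => e \in F) mu w <
  wsum (fun F => e \in F) (fun F => INR #|F| * mu F) w * wsum (fun F => e \notin F) mu w.
Proof.
move=> w_pos; have w_ge0 k : 0 <= w k by apply: Rlt_le.
have := mu_size w_pos e; rewrite /expect probE.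
set N := wsum (fun F => e \in F) mu w; set M := wsum (fun F => e \notin F) mu w.
set KN := wsum (fun F => e \in F) (fun F => INR #|F| * mu F) w.
set KM := wsum (fun F => e \notin F) (fun F => INR #|F| * mu F) w.
have split_mem g : wsum (fun _ => true) g w =
    wsum (fun F => e \in F) g w + wsum (fun F => e \notin F) g w.
  exact: (bigID (fun F : {set E} => e \in F)).
have -> : \big[Rplus/0]_(F : {set E}) (INR #|F| * (if e \in F then 1 else 0) * (mu F * wpow w F)) = KN.
  rewrite /KN /wsum [RHS]big_mkcond; apply: eq_bigr => F _.
  by case: (e \in F); ring.
have -> : \big[Rplus/0]_(F : {set E}) (INR #|F| * (mu F * wpow w F)) = KN + KM.
  rewrite -split_mem; apply: eq_bigr => F _; ring.
have -> : Zpart mu w = N + M by exact: split_mem.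
rewrite split_mem -/N -/M.
have M_gt0 : 0 < M by apply: wsum_mu_gt0; rewrite ?in_set0.
have N_ge0 : 0 <= N by apply: wsum_ge0.
move=> cov; have {}cov : (KN + KM) * N < KN * (N + M).
  have := Rmult_lt_compat_r ((N + M) * (N + M)) _ _ ltac:(nra) cov.
  by congr Rlt; field; lra.
lra.
Qed.

Lemma odds_scale_nondecreasing e w a b : positive_weights w -> 0 < a -> a <= b ->
  wsum (fun F => e \in F) mu (fun k => a * w k) /
    wsum (fun F => e \notin F) mu (fun k => a * w k) <=
  wsum (fun F => e \in F) mu (fun k => b * w k) /
    wsum (fun F => e \notin F) mu (fun k => b * w k).
Proof.
move=> w_pos a_gt0 ab.
pose N l := wsum (fun F => e \in F) mu (fun k => l * w k).
pose M l := wsum (fun F => e \notin F) mu (fun k => l * w k).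
pose KN l := wsum (fun F => e \in F) (fun F => INR #|F| * mu F) (fun k => l * w k).
pose KM l := wsum (fun F => e \notin F) (fun F => INR #|F| * mu F) (fun k => l * w k).
have lw_pos l : 0 < l -> positive_weights (fun k => l * w k).
  by move=> l_gt0 k; apply: Rmult_lt_0_compat.
have M_gt0 l : 0 < l -> 0 < M l.
  by move=> /lw_pos lw; apply: wsum_mu_gt0; rewrite ?in_set0 // => k; apply: Rlt_le.
pose h' l := (KN l / l * M l - KM l / l * N l) / (M l)².
have h_der l : a <= l <= b -> derivable_pt_lim (N / M)%F l (h' l).
  move=> [al _]; have := M_gt0 l ltac:(lra) => M_gt0l.
  by apply: derivable_pt_lim_div; try apply: derivable_pt_lim_wsum_scale; lra.
have h'_gt0 l : 0 < l -> 0 < h' l.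
  move=> l_gt0; have := size_increasing_cross e (lw_pos l l_gt0).
  rewrite -/(N l) -/(M l) -/(KN l) -/(KM l) => cross.
  have M2_gt0 : 0 < (M l)² by rewrite /Rsqr; have := M_gt0 l l_gt0; nra.
  rewrite /h'; apply: Rdiv_lt_0_compat => //.
  have -> : KN l / l * M l - KM l / l * N l = (KN l * M l - KM l * N l) / l by field; lra.
  by apply: Rdiv_lt_0_compat; lra.
have [a_lt_b|<-] := Rle_lt_or_eq_dec _ _ ab; last exact: Rle_refl.
have [c [hba c_ab]] := MVT_cor2 _ _ _ _ a_lt_b h_der.
have := h'_gt0 c ltac:(lra); rewrite /div_fct -/(N a) -/(M a) -/(N b) -/(M b) in hba *.
nra.
Qed.

Lemma cavity_ratio_scale_pos e w a : positive_weights w -> 0 < a -> a <= 1 ->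
  a * cavity_ratio mu e (fun k => a * w k) <= cavity_ratio mu e w.
Proof.
move=> w_pos a_gt0 a_le1.
have := odds_scale_nondecreasing e w_pos a_gt0 a_le1; rewrite -!cavity_ratio_odds /=.
rewrite (_ : (fun k => 1 * w k) = w) => [odds_le|]; last first.
  by apply: functional_extensionality => k; rewrite Rmult_1_l.
apply: (Rmult_le_reg_l (w e)) => //; lra.
Qed.

Lemma cavity_ratio_scale e w a : (forall k, 0 <= w k) -> 0 < a -> a <= 1 ->
  a * cavity_ratio mu e (fun k => a * w k) <= cavity_ratio mu e w.
Proof.
move=> w_ge0 a_gt0 a_le1.
apply: (le_weights_ge0 (f := fun v => a * cavity_ratio mu e (fun k => a * v k))
                       (g := cavity_ratio mu e)) => // [||v v_pos].
- apply: (continuity_pt_scal (fun t => cavity_ratio mu e (fun k => a * (w k + t)))).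
  apply: continuity_pt_cavity_ratio => k.
    exact: continuity_pt_scal (continuity_pt_shift (w k) 0).
  by rewrite Rplus_0_r; apply: Rmult_le_pos; [lra | apply: w_ge0].
- apply: continuity_pt_cavity_ratio => k; first exact: continuity_pt_shift.
  by rewrite Rplus_0_r.
- exact: cavity_ratio_scale_pos.
Qed.

End SizeIncreasing.

End CavityRatio.

Section CavityOperator.
Variables (V : countType) (G : network V).
Hypothesis G_cm : cavity_monotone_network G.

Lemma cavity_opE x i j (ij : j \in nb G i) :
  cavity_op G x i j = cavity_ratio (@lmu V G i) (SeqSub ij) (fun k => x (ssval k) i).
Proof. by rewrite /cavity_op (insubT (fun k => k \in nb G i) ij). Qed.

Lemma cavity_op_antitone x y i j : j \in nb G i ->
  (forall k, k \in nb G i -> 0 <= x k i <= y k i) ->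
  cavity_op G y i j <= cavity_op G x i j.
Proof.
move=> ij xy; rewrite !cavity_opE; have [mu_set0 [mu_ray _]] := G_cm i.
apply: cavity_ratio_antitone => // [|k|k]; first exact: lmu_nonneg.
- by case: (xy _ (ssvalP k)).
- by case: (xy _ (ssvalP k)).
Qed.

Lemma cavity_op_scale x a i j : j \in nb G i ->
  (forall k, k \in nb G i -> 0 <= x k i) -> 0 < a -> a <= 1 ->
  a * cavity_op G (fun k l => a * x k l) i j <= cavity_op G x i j.
Proof.
move=> ij x_ge0 a_gt0 a_le1; rewrite !cavity_opE; have [mu_set0 [_ mu_size]] := G_cm i.
apply: cavity_ratio_scale => // [|k]; [exact: lmu_nonneg | exact/x_ge0/ssvalP].
Qed.

Lemma in_edge_ge0 x t i k : is_cavity_solution G t x -> k \in nb G i -> 0 <= x k i.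
Proof. by move=> [x_ge0 _] ki; apply: x_ge0; rewrite nb_sym. Qed.

Lemma cavity_iter_sandwich t s x : 0 < s -> s <= t -> is_cavity_solution G t x ->
  forall n i j, j \in nb G i -> s / t * x i j <= cavity_iter G s n x i j <= x i j.
Proof.
move=> s_gt0 st x_sol; have t_gt0 : 0 < t by lra.
set a := s / t; have a_gt0 : 0 < a by apply: Rdiv_lt_0_compat.
have a_le1 : a <= 1 by apply: (Rmult_le_reg_r t) => //; rewrite /a; field_simplify; lra.
have s_at : s = a * t by rewrite /a; field; lra.
have x_in_ge0 := in_edge_ge0 x_sol.
elim=> [|n IHn] i j ij.
  by have := x_sol.1 i j ij; rewrite /=; split; nra.
rewrite /cavity_iter iterS -/(cavity_iter G s n x) (x_sol.2 i j ij).
set y := cavity_iter G s n x.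
have y_in k : k \in nb G i -> a * x k i <= y k i <= x k i by move=> ki; apply: IHn; rewrite nb_sym.
have ax_in_ge0 k : k \in nb G i -> 0 <= a * x k i.
  by move=> ki; apply: Rmult_le_pos; [lra | exact: x_in_ge0].
have Gx_le_Gy : cavity_op G x i j <= cavity_op G y i j.
  apply: cavity_op_antitone => // k ki; have := y_in k ki; have := ax_in_ge0 k ki; lra.
have Gy_le_Gax : cavity_op G y i j <= cavity_op G (fun k l => a * x k l) i j.
  by apply: cavity_op_antitone => // k ki; split; [exact: ax_in_ge0 | case: (y_in k ki)].
have := cavity_op_scale ij (fun k ki => x_in_ge0 i k ki) a_gt0 a_le1.
rewrite s_at; split; nra.
Qed.

Lemma cavity_solution_scaling t s x y : 0 < s -> s <= t ->
  is_cavity_solution G t x -> globally_attractive G s y ->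
  forall i j, j \in nb G i -> s / t * x i j <= y i j <= x i j.
Proof.
move=> s_gt0 st x_sol y_attr i j ij.
have y_lim := y_attr x x_sol.1 i j ij.
have sandwich n := cavity_iter_sandwich s_gt0 st x_sol n ij.
split.
- apply: (Rle_cv_lim (Un := fun _ => s / t * x i j)) (Un_cv_const _) y_lim => n.
  exact: (sandwich n).1.
- apply: (Rle_cv_lim (Vn := fun _ => x i j)) y_lim (Un_cv_const _) => n.
  exact: (sandwich n).2.
Qed.

End CavityOperator.

Theorem mainTheorem10 (V : countType) (G : network V) (xs : R -> config V) :
  cavity_monotone_network G ->
  (forall t, 0 < t ->
     is_cavity_solution G t (xs t) /\ globally_attractive G t (xs t) /\
     (forall y, is_cavity_solution G t y ->
        forall i j, j \in nb G i -> y i j = xs t i j)) ->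
  (forall s t, 0 < s -> s <= t -> forall i j, j \in nb G i ->
     s / t * xs t i j <= xs s i j /\ xs s i j <= xs t i j) /\
  (forall i j, j \in nb G i -> forall t0, 0 < t0 ->
     continuity_pt (fun t => xs t i j) t0).
Proof.
move=> G_cm xs_sol.
have scaling s t : 0 < s -> s <= t -> forall i j, j \in nb G i ->
    s / t * xs t i j <= xs s i j <= xs t i j.
  move=> s_gt0 st; have [x_sol _] := xs_sol t ltac:(lra).
  have [_ [y_attr _]] := xs_sol s s_gt0.
  exact: cavity_solution_scaling.
split => // i j ij t0 t0_gt0.
by apply: continuity_pt_scaled_monotone => // s t s_gt0 st; apply: scaling.
Qed.
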